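(* Let $n$ be a positive integer, $\gamma\in\mathbb{F}_{2^n}\setminus\mathbb{F}_2$, and let $f$ be the function on $\mathbb{F}_{2^n}$ defined by $f(1)=\gamma^{-1}$, $f(\gamma)=1$, $f(0)=0$ and $f(x)=x^{-1}$ for $x\notin\{0,1,\gamma\}$. Let $C_n=\{\alpha^3:\alpha\in\mathbb{F}_{2^n}\setminus\mathbb{F}_4\}$. Then \[ \nabla_f=\begin{cases}8,&\text{if } [\,2\mid n \text{ and } \{\gamma^3+\gamma^2,\gamma+1\}\cap C_n\neq\emptyset\,] \text{ or } [\,3\mid n \text{ and } \gamma\in\mathbb{F}_8\setminus\mathbb{F}_2\,],\\ 4,&\text{otherwise.}\end{cases} \] In particular, if $n$ is odd and $3\nmid n$, then $\nabla_f=4$ for all $\gamma\in\mathbb{F}_{2^n}\setminus\mathbb{F}_2$.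
   Context: The function $f$ is the swapped inverse function $Inv\circ(1,\gamma)$ with $Inv(x)=x^{2^n-2}$ and $(1,\gamma)$ the transposition swapping $1$ and $\gamma$. For $a,b\in\mathbb{F}_{2^n}$, $\nabla_f(a,b)$ is the number of $x\in\mathbb{F}_{2^n}$ with $f(x+a+b)+f(x+a)+f(x+b)+f(x)=0$, and $\nabla_f=\max\{\nabla_f(a,b): a,b\in\mathbb{F}_{2^n}\setminus\{0\},\ a\neq b\}$. $\mathbb{F}_4,\mathbb{F}_8$ denote the intersections of $\mathbb{F}_{2^n}$ with the subfields of order $4$ and $8$; so $C_n$ is the set of nonzero cubes in $\mathbb{F}_{2^n}$ other than $1$. *)

From mathcomp Require Import all_boot all_order all_algebra all_field.
Set Implicit Arguments. Unset Strict Implicit. Unset Printing Implicit Defensive.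
Import GRing.Theory.
Local Open Scope ring_scope.

(* Swapped inverse Inv o (1, gamma): f(1)=gamma^-1, f(gamma)=1, f(0)=0,
   f(x)=x^-1 otherwise (MathComp's 0^-1 = 0). *)
Definition swapped_inv (F : finFieldType) (gamma : F) (x : F) : F :=
  if x == 1 then gamma^-1 else if x == gamma then 1 else x^-1.

Definition nabla_ab (F : finFieldType) (f : F -> F) (a b : F) : nat :=
  #|[set x : F | f (x + a + b) + f (x + a) + f (x + b) + f x == 0]|.

Definition nabla (F : finFieldType) (f : F -> F) : nat :=
  (\max_(a : F | a != 0%R) \max_(b : F | (b != 0%R) && (b != a)) nabla_ab f a b)%N.

(* membership in F ∩ F_2, F ∩ F_4, F ∩ F_8 (the subfields of the algebraic closure) *)
Definition inF2 (F : finFieldType) (x : F) : bool := x ^+ 2 == x.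
Definition inF4 (F : finFieldType) (x : F) : bool := x ^+ 4 == x.
Definition inF8 (F : finFieldType) (x : F) : bool := x ^+ 8 == x.

Definition inCn (F : finFieldType) (c : F) : bool :=
  [exists alpha : F, ~~ inF4 alpha && (alpha ^+ 3 == c)].

From mathcomp Require Import all_boot all_algebra all_field all_fingroup all_solvable.
From mathcomp Require Import ring.
Set Implicit Arguments. Unset Strict Implicit. Unset Printing Implicit Defensive.
Import GRing.Theory.
Local Open Scope ring_scope.

(* Let a, b be distinct and nonzero and V = {0, a, b, a + b}.  The second difference
   D(x) = f(x + a + b) + f(x + a) + f(x + b) + f(x) is V-periodic, so its zeros form whole
   cosets of V.  Writing f = Inv + (1 + 1/gamma) * [x in {1, gamma}], the inverse part of D
   equals N / P(x) off V and s / N on V, where P(x) = x(x + a)(x + b)(x + a + b)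
   = x^4 + s x^2 + N x is the subspace polynomial of V; the indicator part equals
   1 + 1/gamma exactly when one of 1, gamma lies in x + V.  Hence every zero coset contains
   0, 1 or gamma, and the vanishing of these three cosets is a polynomial condition on
   gamma, s and N.  Two distinct zero cosets force gamma^3 + gamma + 1 = 0,
   gamma^3 + gamma^2 + 1 = 0, or s = 0 (so F contains F_4 and N = a^3) with a^3 equal to
   gamma + 1 or gamma^3 + gamma^2; three never occur.  Conversely each condition yields an
   explicit pair (a, b) with two zero cosets, and one zero coset always exists, built from a
   cube root of unity or from a solution of u^2 + u = 1/gamma (+ 1). *)

Section Char2.

Variable F : finFieldType.
Hypothesis char2 : 2 \in [pchar F].

(* [ring] uses the given equations only as rewrite rules, so the characteristic enters
   through the numerals that actually occur in our identities. *)
Let num2 : (2 : F) = 0 := esym (GRing.natr_mod_pchar char2 2).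
Let num3 : (3 : F) = 1 := esym (GRing.natr_mod_pchar char2 3).
Let num4 : (4 : F) = 0 := esym (GRing.natr_mod_pchar char2 4).
Let num5 : (5 : F) = 1 := esym (GRing.natr_mod_pchar char2 5).
Let num6 : (6 : F) = 0 := esym (GRing.natr_mod_pchar char2 6).

Tactic Notation "char2_ring" := ring: num2 num3 num4 num5 num6.
Tactic Notation "char2_ring" ":" ne_constr_list(L) :=
  ring: num2 num3 num4 num5 num6 L.
Tactic Notation "char2_field" := field: num2 num3 num4 num5 num6.

Lemma addr_eq0_char2 (x y : F) : (x + y == 0) = (x == y).
Proof. by rewrite addr_eq0 oppr_pchar2. Qed.

Lemma addr_eq_char2 (x y z : F) : (x + y == z) = (y == x + z).
Proof. by apply/eqP/eqP => [<-|->]; rewrite addKr_pchar2. Qed.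

Lemma add_eq_char2 (x y u v : F) : u = v -> x + y = u + v -> x = y.
Proof. by move=> -> /eqP; rewrite addrr_pchar2 // addr_eq0_char2 => /eqP. Qed.

Lemma natr_addb_char2 (b1 b2 : bool) : (b1 + b2)%:R = (b1 (+) b2)%:R :> F.
Proof. by case: b1; case: b2; rewrite //= num2. Qed.

Definition ddiff (f : F -> F) (a b x : F) : F :=
  f (x + a + b) + f (x + a) + f (x + b) + f x.

Definition span2 (a b : F) : seq F := [:: 0; a; b; a + b].

Definition coset2 (a b c : F) : seq F := [seq c + v | v <- span2 a b].

Definition span2_poly (a b x : F) : F :=
  x ^+ 4 + (a ^+ 2 + a * b + b ^+ 2) * x ^+ 2 + a * b * (a + b) * x.

Lemma span2_polyE a b x : span2_poly a b x = x * (x + a) * (x + b) * (x + a + b).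
Proof. rewrite /span2_poly; char2_ring. Qed.

Lemma span2_polyD a b x y :
  span2_poly a b (x + y) = span2_poly a b x + span2_poly a b y.
Proof. rewrite /span2_poly; char2_ring. Qed.

Lemma mem_span2 a b x : (x \in span2 a b) = (span2_poly a b x == 0).
Proof. by rewrite span2_polyE !mulf_eq0 -addrA !addr_eq0_char2 !inE -!orbA. Qed.

Lemma mem0_span2 a b : 0 \in span2 a b.
Proof. exact: mem_head. Qed.

Lemma mem_span2l a b : a \in span2 a b.
Proof. by rewrite !inE eqxx orbT. Qed.

Lemma span2D a b u v : u \in span2 a b -> v \in span2 a b -> u + v \in span2 a b.
Proof. by rewrite !mem_span2 span2_polyD => /eqP-> /eqP->; rewrite addr0. Qed.

Lemma span2_addr a b x u : u \in span2 a b -> (x + u \in span2 a b) = (x \in span2 a b).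
Proof. by rewrite !mem_span2 span2_polyD => /eqP->; rewrite addr0. Qed.

Lemma mem_coset2 a b c x : (x \in coset2 a b c) = (x + c \in span2 a b).
Proof.
apply/mapP/idP => [[v Vv ->]|Vxc]; first by rewrite addrC addKr_pchar2.
by exists (x + c); rewrite // addrCA addrr_pchar2 // addr0.
Qed.

Section Derivative.

Variable f : F -> F.

Lemma ddiffC a b x : ddiff f a b x = ddiff f b a x.
Proof. by rewrite /ddiff (addrAC x a b); ring. Qed.

Lemma ddiff_shiftl a b x : ddiff f a b (x + a) = ddiff f a b x.
Proof. by rewrite /ddiff !(addrK_pchar2 char2) (addrAC x a b); ring. Qed.

Lemma ddiff_shift a b x v : v \in span2 a b -> ddiff f a b (x + v) = ddiff f a b x.
Proof.
have shiftr y : ddiff f a b (y + b) = ddiff f a b y by rewrite !(ddiffC a) ddiff_shiftl.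
rewrite !inE => /or4P[] /eqP->; rewrite ?addr0 ?ddiff_shiftl ?shiftr //.
by rewrite addrA shiftr ddiff_shiftl.
Qed.

Lemma ddiff_coset a b x c : x + c \in span2 a b -> ddiff f a b x = ddiff f a b c.
Proof. by move/(ddiff_shift c); rewrite addrCA addrr_pchar2 // addr0. Qed.

Definition covers_zeros (a b : F) (r : seq F) :=
  forall x, ddiff f a b x = 0 -> has (fun c => x + c \in span2 a b) r.

Lemma covers_zeros_trans a b r r' : covers_zeros a b r ->
    (forall c, c \in r -> ddiff f a b c = 0 -> has (fun c' => c + c' \in span2 a b) r') ->
  covers_zeros a b r'.
Proof.
move=> cov_r r_r' x Dx; have /hasP[c rc Vxc] := cov_r x Dx.
have /hasP[c' r'c' Vcc'] := r_r' c rc (etrans (esym (ddiff_coset Vxc)) Dx).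
apply/hasP; exists c' => //.
have -> : x + c' = x + c + (c + c') by char2_ring.
exact: span2D.
Qed.

Lemma nabla_ab_le_cover a b r : covers_zeros a b r -> (nabla_ab f a b <= 4 * size r)%N.
Proof.
move=> cov_r; have size_cosets : size (flatten [seq coset2 a b c | c <- r]) = (4 * size r)%N.
  rewrite size_flatten /shape -map_comp (@eq_map _ _ _ (fun=> 4%N)) //.
  by elim: r {cov_r} => //= _ r ->; rewrite mulnS.
rewrite -size_cosets; apply: leq_trans (card_size _); apply: subset_leq_card.
apply/subsetP => x; rewrite inE => /eqP/cov_r/hasP[c rc Vxc].
by apply/flatten_mapP; exists c; rewrite ?mem_coset2.
Qed.

Lemma nabla_ab_le4_or_split a b r : covers_zeros a b r ->
  (nabla_ab f a b <= 4)%N \/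
  exists c c', [/\ c \in r, c' \in r, ddiff f a b c = 0, ddiff f a b c' = 0 &
                   c + c' \notin span2 a b].
Proof.
move=> cov_r; case: (pickP [pred x | ddiff f a b x == 0]) => [x0 /eqP Dx0|no_zero].
  have /hasP[c0 rc0 Vx0c0] := cov_r x0 Dx0.
  have Dc0 : ddiff f a b c0 = 0 by rewrite -(ddiff_coset Vx0c0).
  case: (boolP (has (fun c => (ddiff f a b c == 0) && (c0 + c \notin span2 a b)) r)).
    by case/hasP=> c rc /andP[/eqP Dc Vc0c]; right; exists c0, c.
  move/hasPn=> split_r; left; apply: (nabla_ab_le_cover (r := [:: c0])).
  apply: covers_zeros_trans cov_r _ => c rc Dc; rewrite /= orbF addrC.
  by move: (split_r c rc); rewrite Dc eqxx /= negbK.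
left; rewrite /nabla_ab eq_card0 // => x; rewrite inE; exact: no_zero.
Qed.

Lemma covers_zeros_drop a b r c r' : covers_zeros a b (r ++ c :: r') ->
    (ddiff f a b c = 0 -> has (fun c' => c + c' \in span2 a b) (r ++ r')) ->
  covers_zeros a b (r ++ r').
Proof.
move=> cov drop_c; apply: covers_zeros_trans cov _ => e.
rewrite mem_cat inE orbCA -mem_cat => /orP[/eqP->|re _]; first exact: drop_c.
by apply/hasP; exists e => //; rewrite addrr_pchar2 // mem0_span2.
Qed.

Definition nabla_reaches k :=
  exists a b, [/\ a != 0, b != 0, a != b & (k <= nabla_ab f a b)%N].

Lemma nabla_eq_reached k :
    (forall a b, a != 0 -> b != 0 -> a != b -> (nabla_ab f a b <= k)%N) ->
  nabla_reaches k -> nabla f = k.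
Proof.
move=> le_k [a [b [a0 b0 ab k_le]]]; apply/eqP; rewrite eqn_leq; apply/andP; split.
  apply/bigmax_leqP => a' a'0; apply/bigmax_leqP => b' /andP[b'0 b'a'].
  by apply: le_k; rewrite // eq_sym.
apply: leq_trans (leq_bigmax_cond a a0); apply: leq_trans k_le _.
by apply: (leq_bigmax_cond (P := fun b' => (b' != 0) && (b' != a))); rewrite b0 eq_sym.
Qed.

Section Independent.

Variables a b : F.
Hypotheses (a0 : a != 0) (b0 : b != 0) (ab : a != b).

Lemma uniq_span2 : uniq (span2 a b).
Proof.
have neq_addr (x y : F) : y != 0 -> x != x + y.
  by move=> y0; rewrite eq_sym addr_eq_char2 addrr_pchar2.
rewrite /= !inE !negb_or !andbT ![0 == _]eq_sym addr_eq0_char2 a0 b0 ab !neq_addr //.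
by rewrite addrC neq_addr.
Qed.

Lemma ddiff_indicator p x :
  ddiff (fun y => (y == p)%:R) a b x = (x + p \in span2 a b)%:R.
Proof.
have E v : (x + v == p) = (v == x + p) := addr_eq_char2 x v p.
rewrite /ddiff -!natrD -(count_uniq_mem _ uniq_span2) -(addrA x a b) !E.
by rewrite -[x in (x == p)]addr0 E /= addn0; congr (_%:R); ring.
Qed.

Lemma uniq_coset2 c : uniq (coset2 a b c).
Proof. by rewrite map_inj_uniq ?uniq_span2 //; apply: addrI. Qed.

Lemma coset2_sub_zeros c : ddiff f a b c = 0 ->
  {subset coset2 a b c <= [set x | ddiff f a b x == 0]}.
Proof. by move=> Dc x; rewrite mem_coset2 in_set => /ddiff_coset->; rewrite Dc. Qed.

Lemma nabla_ab_ge4 c : ddiff f a b c = 0 -> (4 <= nabla_ab f a b)%N.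
Proof.
move=> Dc; rewrite -[4%N]/(size (coset2 a b c)) -(card_uniqP (uniq_coset2 c)).
exact/subset_leq_card/subsetP/coset2_sub_zeros.
Qed.

Lemma nabla_ab_ge8 c c' : ddiff f a b c = 0 -> ddiff f a b c' = 0 ->
  c + c' \notin span2 a b -> (8 <= nabla_ab f a b)%N.
Proof.
move=> Dc Dc' Vcc'.
have uniq_cosets : uniq (coset2 a b c ++ coset2 a b c').
  rewrite cat_uniq !uniq_coset2 andbT andTb; apply/hasPn => x; rewrite !mem_coset2 => Vxc'.
  apply: contra Vcc' => Vxc.
  have -> : c + c' = x + c + (x + c') by char2_ring.
  exact: span2D.
rewrite -[8%N]/(size (coset2 a b c ++ coset2 a b c')) -(card_uniqP uniq_cosets).
apply/subset_leq_card/subsetP => x; rewrite mem_cat => /orP[].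
  exact: coset2_sub_zeros.
exact: coset2_sub_zeros.
Qed.

End Independent.

End Derivative.

Lemma inCn_cube (x : F) : x != 0 -> x ^+ 3 != 1 -> inCn (x ^+ 3).
Proof.
move=> x0 x3; apply/existsP; exists x; rewrite eqxx andbT /inF4.
by apply: contra x3 => /eqP x4; apply/eqP/(mulfI x0); rewrite -exprS x4 mulr1.
Qed.

Definition contains_F4 : bool := [exists w : F, w ^+ 2 + w + 1 == 0].

Lemma contains_F4_of_span2 (a b : F) : a != 0 -> a ^+ 2 + a * b + b ^+ 2 = 0 ->
  contains_F4.
Proof.
move=> a0 s0; apply/existsP; exists (b / a).
have : a ^+ 2 * ((b / a) ^+ 2 + b / a + 1) = 0 by rewrite -s0; field.
by move/eqP; rewrite mulf_eq0 expf_eq0 (negbTE a0).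
Qed.

Lemma span2_nzprodE (a b : F) :
  a * b * (a + b) = a ^+ 3 + a * (a ^+ 2 + a * b + b ^+ 2).
Proof. char2_ring. Qed.

Lemma span2_cube_root1 (c w : F) : c != 0 -> w ^+ 2 + w + 1 = 0 ->
  [/\ c * w != 0, c != c * w, c ^+ 2 + c * (c * w) + (c * w) ^+ 2 = 0
    & c * (c * w) * (c + c * w) = c ^+ 3].
Proof.
move=> c0 hw; have w2 : w ^+ 2 = w + 1 by apply: (add_eq_char2 hw); char2_ring.
have w0 : w != 0 by apply: contra_eq_neq hw => ->; rewrite expr0n !add0r oner_neq0.
have w1 : w != 1.
  by apply: contra_eq_neq hw => ->; rewrite expr1n addrr_pchar2 // add0r oner_neq0.
have s0 : c ^+ 2 + c * (c * w) + (c * w) ^+ 2 = 0 by char2_ring: w2.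
split=> //; first exact: mulf_neq0.
  by rewrite -[c in c != _]mulr1 (inj_eq (mulfI c0)) eq_sym.
by rewrite span2_nzprodE s0 mulr0 addr0.
Qed.

Lemma card_le_double_image (T T' : finType) (h : T -> T') :
  (forall y, #|[pred x | h x == y]| <= 2)%N -> (#|T| <= 2 * #|[set h x | x : T]|)%N.
Proof.
move=> fib; have -> : #|T| = (\sum_(x : T) 1)%N by rewrite sum1_card.
rewrite (partition_big h (mem [set h x | x : T])) /=.
  rewrite mulnC -sum_nat_const leq_sum // => y _.
  by rewrite (eq_bigl (fun x => h x == y)) ?sum1_card //; apply: fib.
by move=> x _; apply: imset_f.
Qed.

Lemma artin_schreier (y : F) : ~~ contains_F4 ->
  exists u : F, u ^+ 2 + u = y \/ u ^+ 2 + u = y + 1.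
Proof.
move=> no_omega; pose h (u : F) := u ^+ 2 + u.
have hD u v : h (u + v) = h u + h v by rewrite /h; char2_ring.
have fib z : (#|[pred u | h u == z]| <= 2)%N.
  case: (pickP [pred u | h u == z]) => [u /eqP hu|]; last by move/eq_card0->.
  apply: leq_trans (card_size [:: u; u + 1]); apply/subset_leq_card/subsetP => v /eqP hv.
  have : (u + v) * (u + v + 1) == 0.
    have -> : (u + v) * (u + v + 1) = h (u + v) by rewrite /h; char2_ring.
    by rewrite hD hu hv addrr_pchar2.
  rewrite mulf_eq0 -addrA !addr_eq0_char2 !inE.
  by case/orP=> /eqP->; rewrite ?addrK_pchar2 // eqxx ?orbT.
pose A := [set h u | u : F]; pose B := [set x + 1 | x in A].
have AB0 : A :&: B = set0.
  apply/setP => x; rewrite !inE; apply/negP.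
  case/andP=> /imsetP[u _ ->] /imsetP[_ /imsetP[v _ ->] huv].
  move/negP: no_omega; apply; apply/existsP; exists (u + v).
  by rewrite -/(h (u + v)) hD huv; apply/eqP; char2_ring.
have AB : A :|: B = [set: F].
  apply/eqP; rewrite eqEcard subsetT cardsT -[X in (_ <= X)%N]addn0 -(cards0 F) -AB0.
  have cardB : #|B| = #|A| by apply: card_imset; exact: can_inj (addrK_pchar2 char2 1).
  by rewrite cardsUI cardB addnn -mul2n card_le_double_image.
have : y \in A :|: B by rewrite AB inE.
case/setUP => /imsetP[x Ax ->]; first by exists x; left.
by case/imsetP: Ax => u _ ->; exists u; right; rewrite addrK_pchar2.
Qed.

Lemma expr_2exp_mod (x : F) k m : x ^+ (2 ^ k) = x -> x ^+ (2 ^ m) = x ^+ (2 ^ (m %% k)).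
Proof.
move=> xk; have xqk q : x ^+ (2 ^ (q * k)) = x.
  by elim: q => [|q IH]; rewrite ?mul0n ?expr1 // mulSn expnD exprM xk IH.
by rewrite {1}(divn_eq m k) expnD exprM xqk.
Qed.

Lemma expr_2exp_gcd (x : F) k m :
  x ^+ (2 ^ k) = x -> x ^+ (2 ^ m) = x -> x ^+ (2 ^ gcdn k m) = x.
Proof.
elim/ltn_ind: k m => k IH m xk xm; have [->|k0] := eqVneq k 0; first by rewrite gcd0n.
rewrite gcdnE (negbTE k0); apply: (IH (m %% k)%N _ k) => //; first by rewrite ltn_mod lt0n.
by rewrite -(expr_2exp_mod _ xk).
Qed.

Lemma prime_dvd_of_expr_2exp (x : F) k m : prime k ->
  x ^+ (2 ^ k) = x -> x ^+ (2 ^ m) = x -> x ^+ 2 != x -> (k %| m)%N.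
Proof.
move=> k_pr xk xm; apply: contraNT => km.
have /eqP kmE : coprime k m by rewrite prime_coprime.
by have := expr_2exp_gcd xk xm; rewrite kmE => ->.
Qed.

Lemma F8_cubic (x : F) : x ^+ 8 = x -> x ^+ 2 != x ->
  x ^+ 3 + x + 1 = 0 \/ x ^+ 3 + x ^+ 2 + 1 = 0.
Proof.
move=> x8 x2; have : x * (x + 1) * ((x ^+ 3 + x + 1) * (x ^+ 3 + x ^+ 2 + 1)) == 0.
  have -> : x * (x + 1) * ((x ^+ 3 + x + 1) * (x ^+ 3 + x ^+ 2 + 1)) = x ^+ 8 + x.
    by char2_ring.
  by rewrite x8 addrr_pchar2.
rewrite !mulf_eq0 addr_eq0_char2 => /orP[/orP[]|/orP[]] /eqP; [| |by left|by right];
  by move=> x01; rewrite x01 ?expr0n ?expr1n eqxx in x2.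
Qed.

Section SwappedInverse.

Variable g : F.
Hypotheses (g0 : g != 0) (g1 : g != 1).

Local Notation f := (swapped_inv g).
Local Notation delta := (1 + g^-1).

(* The condition of the theorem for [nabla f = 8], stated inside [F]; see [nabla8_condE]. *)
Definition nabla8_cond : bool :=
  [|| contains_F4 && (inCn (g ^+ 3 + g ^+ 2) || inCn (g + 1)),
      g ^+ 3 + g + 1 == 0 | g ^+ 3 + g ^+ 2 + 1 == 0].

Lemma swapped_invE x : f x = x^-1 + delta * ((x == 1) + (x == g))%:R.
Proof.
rewrite /swapped_inv; have [->|x1] := eqVneq x 1.
  by rewrite eq_sym (negbTE g1) /= invr1 mulr1; char2_ring.
have [->|xg] := eqVneq x g; first by rewrite /= mulr1; char2_ring.
by rewrite /= mulr0 addr0.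
Qed.

Lemma divr_add_delta_eq0 y z : z != 0 ->
  (y / z + delta == 0) = (g * y == (g + 1) * z).
Proof.
move=> z0; have -> : y / z + delta = (g * y + (g + 1) * z) / (g * z).
  by char2_field; rewrite z0 g0.
by rewrite mulf_eq0 invr_eq0 mulf_eq0 (negbTE g0) (negbTE z0) !orbF addr_eq0_char2.
Qed.

Section Span.

Variables a b : F.
Hypotheses (a0 : a != 0) (b0 : b != 0) (ab : a != b).

Local Notation V := (span2 a b).
Local Notation s := (a ^+ 2 + a * b + b ^+ 2).
Local Notation N := (a * b * (a + b)).
Local Notation P := (span2_poly a b).

Lemma span2_nzprod_neq0 : N != 0.
Proof. by rewrite !mulf_neq0 // addr_eq0_char2. Qed.

Lemma ddiff_swapped_invE x : ddiff f a b x =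
  ddiff GRing.inv a b x + delta * ((x + 1 \in V) (+) (x + g \in V))%:R.
Proof.
rewrite -natr_addb_char2 natrD -!ddiff_indicator // /ddiff !swapped_invE !natrD.
ring.
Qed.

Lemma ddiff_inv_notin x : x \notin V -> ddiff GRing.inv a b x = N / P x.
Proof.
move=> Vx; have Px0 : P x != 0 by rewrite -mem_span2.
apply: (canRL (mulfK Px0)); move: Px0.
rewrite span2_polyE !mulf_eq0 !negb_or => /andP[/andP[/andP[x0 xa] xb] xab].
have -> : ddiff GRing.inv a b x * (x * (x + a) * (x + b) * (x + a + b)) =
    (x + a) * (x + b) * x + (x + a + b) * (x + b) * x + (x + a + b) * (x + a) * x
    + (x + a + b) * (x + a) * (x + b).
  by rewrite /ddiff; field; rewrite ?x0 ?xa ?xb ?xab.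
char2_ring.
Qed.

Lemma ddiff_inv0 : ddiff GRing.inv a b 0 = s / N.
Proof.
have ab0 : a + b != 0 by rewrite addr_eq0_char2.
apply: (canRL (mulfK span2_nzprod_neq0)).
have -> : ddiff GRing.inv a b 0 * N = a * b + (a + b) * b + (a + b) * a.
  by rewrite /ddiff !add0r invr0 addr0; field; rewrite ?a0 ?b0 ?ab0.
char2_ring.
Qed.

Lemma ddiff0_eq0 : (ddiff f a b 0 == 0) =
  if (1 \in V) (+) (g \in V) then g * s == (g + 1) * N else s == 0.
Proof.
rewrite ddiff_swapped_invE ddiff_inv0 !add0r.
case: (_ (+) _); first by rewrite mulr1 divr_add_delta_eq0 ?span2_nzprod_neq0.
by rewrite mulr0 addr0 mulf_eq0 invr_eq0 (negbTE span2_nzprod_neq0) orbF.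
Qed.

Lemma ddiff_eq0_notin c : c \notin V -> (ddiff f a b c == 0) =
  ((c + 1 \in V) (+) (c + g \in V)) && (g * N == (g + 1) * P c).
Proof.
move=> Vc; have Pc0 : P c != 0 by rewrite -mem_span2.
rewrite ddiff_swapped_invE ddiff_inv_notin //.
case: (_ (+) _); first by rewrite mulr1 divr_add_delta_eq0.
by rewrite mulr0 addr0 mulf_eq0 invr_eq0 (negbTE Pc0) (negbTE span2_nzprod_neq0).
Qed.

Lemma ddiff1_eq0 : 1 \notin V ->
  (ddiff f a b 1 == 0) = (1 + g \notin V) && (g * N == (g + 1) * P 1).
Proof.
by move=> V1; rewrite ddiff_eq0_notin // addrr_pchar2 // mem0_span2.
Qed.

Lemma ddiffg_eq0 : g \notin V ->
  (ddiff f a b g == 0) = (1 + g \notin V) && (g * N == (g + 1) * P g).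
Proof.
move=> Vg; rewrite ddiff_eq0_notin // addrr_pchar2 // mem0_span2.
by rewrite addbT addrC.
Qed.

Lemma ddiff0_zero_same : s = 0 -> (1 \in V) = (g \in V) -> ddiff f a b 0 = 0.
Proof. by move=> s0 V1g; apply/eqP; rewrite ddiff0_eq0 V1g addbb s0. Qed.

Lemma ddiff0_zero_sep : (1 \in V) != (g \in V) -> g * s = (g + 1) * N ->
  ddiff f a b 0 = 0.
Proof.
by move=> V1g Es; apply/eqP; rewrite ddiff0_eq0 -negb_eqb V1g Es eqxx.
Qed.

Lemma ddiff1_zero : 1 \notin V -> 1 + g \notin V ->
  g * N = (g + 1) * P 1 -> ddiff f a b 1 = 0.
Proof. by move=> V1 V1g EN; apply/eqP; rewrite ddiff1_eq0 // V1g EN eqxx. Qed.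

Lemma ddiffg_zero : g \notin V -> 1 + g \notin V ->
  g * N = (g + 1) * P g -> ddiff f a b g = 0.
Proof. by move=> Vg V1g EN; apply/eqP; rewrite ddiffg_eq0 // V1g EN eqxx. Qed.

Lemma swapped_inv_covers : covers_zeros f a b [:: 0; 1; g].
Proof.
move=> x Dx; apply/hasP.
have [Vx|Vx] := boolP (x \in V); first by exists 0; rewrite ?addr0 ?mem_head.
have [Vx1|Vx1] := boolP (x + 1 \in V); first by exists 1 => //; rewrite !inE eqxx orbT.
have [Vxg|Vxg] := boolP (x + g \in V); first by exists g => //; rewrite !inE eqxx !orbT.
by move/eqP: Dx; rewrite ddiff_eq0_notin // (negbTE Vx1) (negbTE Vxg).
Qed.

Lemma span2_poly1 : P 1 = 1 + s + N.
Proof. by rewrite /span2_poly !expr1n !mulr1. Qed.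

Lemma mem_span2_1g : (1 + g \in V) = (P 1 == P g).
Proof. by rewrite mem_span2 span2_polyD addr_eq0_char2. Qed.

Lemma cubic1_of_one_in_span : 1 \in V -> g \notin V ->
  ddiff f a b 0 = 0 -> ddiff f a b g = 0 -> g ^+ 3 + g + 1 = 0.
Proof.
move=> V1 Vg /eqP D0 /eqP Dg.
move: D0; rewrite ddiff0_eq0 V1 (negbTE Vg) /= => /eqP D0.
move: Dg; rewrite ddiffg_eq0 // => /andP[_ /eqP Dg].
move: V1; rewrite mem_span2 span2_poly1 => /eqP V1.
have Es : s = N + 1 by apply: (add_eq_char2 V1); char2_ring.
rewrite Es in D0 Dg; have EN : N = g by apply: (add_eq_char2 D0); char2_ring.
rewrite /span2_poly Es EN in Dg.
have : g ^+ 2 * (g ^+ 3 + g + 1) = 0 by apply: (add_eq_char2 Dg); char2_ring.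
by move/eqP; rewrite mulf_eq0 expf_eq0 (negbTE g0) => /eqP.
Qed.

Lemma cubic2_of_g_in_span : g \in V -> 1 \notin V ->
  ddiff f a b 0 = 0 -> ddiff f a b 1 = 0 -> g ^+ 3 + g ^+ 2 + 1 = 0.
Proof.
move=> Vg V1 /eqP D0 /eqP D1.
move: D0; rewrite ddiff0_eq0 Vg (negbTE V1) /= => /eqP D0.
move: D1; rewrite ddiff1_eq0 // span2_poly1 => /andP[_ /eqP D1].
move: Vg; rewrite mem_span2 /span2_poly => /eqP Vg.
have EN : N = g ^+ 3 + s * g by apply: (mulfI g0); apply: (add_eq_char2 Vg); char2_ring.
rewrite EN in D0 D1.
have Es : s = g ^+ 2 + g.
  by apply: (mulfI (expf_neq0 2 g0)); apply: (add_eq_char2 D0); char2_ring.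
by rewrite Es in D1; apply: (add_eq_char2 D1); char2_ring.
Qed.

Lemma no_zeros1g_off_span : 1 \notin V -> g \notin V -> 1 + g \notin V ->
  ddiff f a b 1 = 0 -> ddiff f a b g = 0 -> False.
Proof.
move=> V1 Vg V1g /eqP D1 /eqP Dg.
move: D1; rewrite ddiff1_eq0 // => /andP[_ /eqP D1].
move: Dg; rewrite ddiffg_eq0 // => /andP[_ /eqP Dg].
have g10 : g + 1 != 0 by rewrite addr_eq0_char2.
by move: V1g; rewrite mem_span2_1g (mulfI g10 (etrans (esym D1) Dg)) eqxx.
Qed.

Lemma zero0_off_span : 1 \notin V -> g \notin V -> ddiff f a b 0 = 0 ->
  s = 0 /\ contains_F4.
Proof.
move=> V1 Vg /eqP; rewrite ddiff0_eq0 (negbTE V1) (negbTE Vg) /= => /eqP s0.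
by split; last exact: contains_F4_of_span2 s0.
Qed.

Lemma nabla8_cond_zeros01_off_span : 1 \notin V -> g \notin V -> 1 + g \notin V ->
  ddiff f a b 0 = 0 -> ddiff f a b 1 = 0 -> nabla8_cond.
Proof.
move=> V1 Vg V1g D0 /eqP D1; have [s0 omega] := zero0_off_span V1 Vg D0.
move: D1; rewrite ddiff1_eq0 // span2_poly1 s0 => /andP[_ /eqP D1].
have EN : N = g + 1 by apply: (add_eq_char2 D1); char2_ring.
have a3 : a ^+ 3 = g + 1 by rewrite -EN span2_nzprodE s0 mulr0 addr0.
by rewrite /nabla8_cond omega -a3 inCn_cube ?orbT // a3 -subr_eq0 addrK.
Qed.

Lemma nabla8_cond_zeros0g_off_span : 1 \notin V -> g \notin V -> 1 + g \notin V ->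
  ddiff f a b 0 = 0 -> ddiff f a b g = 0 -> nabla8_cond.
Proof.
move=> V1 Vg V1g D0 /eqP Dg; have [s0 omega] := zero0_off_span V1 Vg D0.
move: Dg; rewrite ddiffg_eq0 // /span2_poly s0 => /andP[_ /eqP Dg].
have EN : N = g ^+ 3 + g ^+ 2.
  by apply: (mulfI (expf_neq0 2 g0)); apply: (add_eq_char2 Dg); char2_ring.
have [cubic|ncubic] := eqVneq (g ^+ 3 + g ^+ 2) 1.
  by rewrite /nabla8_cond cubic addrr_pchar2 // eqxx !orbT.
have a3 : a ^+ 3 = g ^+ 3 + g ^+ 2 by rewrite -EN span2_nzprodE s0 mulr0 addr0.
by rewrite /nabla8_cond omega -a3 inCn_cube // a3.
Qed.

Lemma nabla8_cond_zeros01 : 1 \notin V ->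
  ddiff f a b 0 = 0 -> ddiff f a b 1 = 0 -> nabla8_cond.
Proof.
move=> V1 D0 D1; have [Vg|Vg] := boolP (g \in V).
  by rewrite /nabla8_cond (cubic2_of_g_in_span Vg V1 D0 D1) eqxx !orbT.
have [V1g|V1g] := boolP (1 + g \in V); last exact: nabla8_cond_zeros01_off_span.
by move/eqP: D1; rewrite ddiff1_eq0 // V1g.
Qed.

Lemma nabla8_cond_zeros0g : g \notin V ->
  ddiff f a b 0 = 0 -> ddiff f a b g = 0 -> nabla8_cond.
Proof.
move=> Vg D0 Dg; have [V1|V1] := boolP (1 \in V).
  by rewrite /nabla8_cond (cubic1_of_one_in_span V1 Vg D0 Dg) eqxx !orbT.
have [V1g|V1g] := boolP (1 + g \in V); last exact: nabla8_cond_zeros0g_off_span.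
by move/eqP: Dg; rewrite ddiffg_eq0 // V1g.
Qed.

Lemma nabla8_cond_zeros1g : 1 + g \notin V ->
  ddiff f a b 1 = 0 -> ddiff f a b g = 0 -> nabla8_cond.
Proof.
move=> V1g D1 Dg; have [V1|V1] := boolP (1 \in V).
  have Vg : g \notin V by apply: contra V1g; apply: span2D.
  by apply: nabla8_cond_zeros0g => //; apply: etrans D1; apply: ddiff_coset; rewrite add0r.
have [Vg|Vg] := boolP (g \in V).
  by apply: nabla8_cond_zeros01 => //; apply: etrans Dg; apply: ddiff_coset; rewrite add0r.
by case: (no_zeros1g_off_span V1 Vg V1g D1 Dg).
Qed.

Lemma nabla_ab_swapped_inv_le4 : ~~ nabla8_cond -> (nabla_ab f a b <= 4)%N.
Proof.
move=> ncond; case: (nabla_ab_le4_or_split swapped_inv_covers) => //.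
case=> c [c' [rc rc' Dc Dc' Vcc']]; case/negP: ncond.
move: rc rc'; rewrite !inE => /or3P[] /eqP Ec /or3P[] /eqP Ec'; subst c c';
  rewrite ?addr0 ?add0r ?addrr_pchar2 ?mem0_span2 // in Vcc'.
- exact: nabla8_cond_zeros01.
- exact: nabla8_cond_zeros0g.
- exact: nabla8_cond_zeros01.
- exact: nabla8_cond_zeros1g.
- exact: nabla8_cond_zeros0g.
- by apply: nabla8_cond_zeros1g; rewrite // addrC.
Qed.

Lemma nabla_ab_swapped_inv_le8 : (nabla_ab f a b <= 8)%N.
Proof.
have cov := swapped_inv_covers.
have drop_1 : (ddiff f a b 1 = 0 -> (1 \in V) || (1 + g \in V)) ->
    (nabla_ab f a b <= 8)%N.
  move=> V1; apply: (nabla_ab_le_cover (r := [:: 0; g])).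
  apply: (covers_zeros_drop (r := [:: 0]) (r' := [:: g]) cov) => /V1 /orP[V1'|V1g].
    by apply/hasP; exists 0; rewrite ?addr0 // !inE eqxx.
  by apply/hasP; exists g => //; rewrite !inE eqxx orbT.
have drop_g : (ddiff f a b g = 0 -> g \in V) -> (nabla_ab f a b <= 8)%N.
  move=> Vg; apply: (nabla_ab_le_cover (r := [:: 0; 1])).
  apply: (covers_zeros_drop (r := [:: 0; 1]) (r' := [::]) cov) => /Vg Vg'.
  by apply/hasP; exists 0; rewrite ?addr0 // !inE eqxx.
have [V1|V1] := boolP ((1 \in V) || (1 + g \in V)); first exact: drop_1.
have [Vg|Vg] := boolP (g \in V); first exact: drop_g.
move: V1; rewrite negb_or => /andP[V1 V1g].
have [D1|D1] := eqVneq (ddiff f a b 1) 0.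
  by apply: drop_g => Dg; case: (no_zeros1g_off_span V1 Vg V1g D1 Dg).
by apply: drop_1 => /eqP; rewrite (negbTE D1).
Qed.

End Span.

Lemma nabla_reaches8_cubic1 : g ^+ 3 + g + 1 = 0 -> nabla_reaches f 8.
Proof.
move=> G1; have g3 : g ^+ 3 = g + 1 by apply: (add_eq_char2 G1); char2_ring.
pose u := g ^+ 2 + 1; have one0 := oner_neq0 F.
have u0 : u != 0.
  by rewrite (_ : u = (g + 1) ^+ 2) ?expf_neq0 ?addr_eq0_char2 // /u; char2_ring.
have one_u : 1 != u by rewrite eq_sym -subr_eq0 addrK expf_neq0.
have Es : 1 ^+ 2 + 1 * u + u ^+ 2 = 1 + g by rewrite /u; char2_ring: g3.
have EN : 1 * u * (1 + u) = g by rewrite /u; char2_ring: g3.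
have Pg : span2_poly 1 u g = g ^+ 3 * (g + 1) by rewrite /span2_poly Es EN; char2_ring.
have Vg : g \notin span2 1 u by rewrite mem_span2 Pg mulf_neq0 ?expf_neq0 ?addr_eq0_char2.
have V1g : 1 + g \notin span2 1 u by rewrite addrC span2_addr ?mem_span2l.
have D0 : ddiff f 1 u 0 = 0.
  apply: ddiff0_zero_sep => //; first by rewrite mem_span2l (negbTE Vg).
  by rewrite Es EN; char2_ring.
have Dg : ddiff f 1 u g = 0.
  by apply: ddiffg_zero => //; rewrite Pg EN; char2_ring: g3.
by exists 1, u; split => //; apply: nabla_ab_ge8 D0 Dg _; rewrite ?add0r.
Qed.

Lemma nabla_reaches8_cubic2 : g ^+ 3 + g ^+ 2 + 1 = 0 -> nabla_reaches f 8.
Proof.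
move=> G2; have g3 : g ^+ 3 = g ^+ 2 + 1 by apply: (add_eq_char2 G2); char2_ring.
have g20 : g ^+ 2 != 0 by rewrite expf_neq0.
have gg2 : g != g ^+ 2 by rewrite -[g in g != _]mulr1 expr2 (inj_eq (mulfI g0)) eq_sym.
have Es : g ^+ 2 + g * g ^+ 2 + (g ^+ 2) ^+ 2 = g ^+ 2 + g by char2_ring: g3.
have EN : g * g ^+ 2 * (g + g ^+ 2) = g ^+ 2 by char2_ring: g3.
have P1 : span2_poly g (g ^+ 2) 1 = g + 1 by rewrite span2_poly1 Es EN; char2_ring.
have V1 : 1 \notin span2 g (g ^+ 2) by rewrite mem_span2 P1 addr_eq0_char2.
have V1g : 1 + g \notin span2 g (g ^+ 2) by rewrite span2_addr ?mem_span2l.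
have D0 : ddiff f g (g ^+ 2) 0 = 0.
  apply: ddiff0_zero_sep => //; first by rewrite (negbTE V1) mem_span2l.
  by rewrite Es EN; char2_ring.
have D1 : ddiff f g (g ^+ 2) 1 = 0.
  by apply: ddiff1_zero => //; rewrite P1 EN; char2_ring: g3.
by exists g, (g ^+ 2); split => //; apply: nabla_ab_ge8 D0 D1 _; rewrite ?add0r.
Qed.

Lemma nabla_reaches8_cube (c w : F) : w ^+ 2 + w + 1 = 0 -> c != 0 ->
    (c ^+ 3 = g + 1 /\ g ^+ 3 + g + 1 != 0) \/
    (c ^+ 3 = g ^+ 3 + g ^+ 2 /\ g ^+ 3 + g ^+ 2 + 1 != 0) ->
  nabla_reaches f 8.
Proof.
move=> hw c0 cases; have [b0 ab Es EN] := span2_cube_root1 c0 hw.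
have g10 : g + 1 != 0 by rewrite addr_eq0_char2.
pose V := span2 c (c * w).
have reach8 c' : c' \notin V -> ddiff f c (c * w) c' = 0 -> 1 \notin V -> g \notin V ->
    (8 <= nabla_ab f c (c * w)%R)%N.
  move=> Vc' Dc' V1 Vg; have D0 : ddiff f c (c * w) 0 = 0.
    by apply: ddiff0_zero_same; rewrite // (negbTE V1) (negbTE Vg).
  by apply: nabla_ab_ge8 D0 Dc' _; rewrite ?add0r.
exists c, (c * w); split=> //.
case: cases => [[c3 G1]|[c3 G2]].
- have P1 : span2_poly c (c * w) 1 = g by rewrite span2_poly1 Es EN c3; char2_ring.
  have Pg : span2_poly c (c * w) g = g * (g ^+ 3 + g + 1).
    by rewrite /span2_poly Es EN c3; char2_ring.
  have V1g : 1 + g \notin V.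
    rewrite mem_span2 span2_polyD P1 Pg.
    rewrite (_ : g + g * (g ^+ 3 + g + 1) = (g * (g + 1)) ^+ 2); last by char2_ring.
    by rewrite expf_neq0 ?mulf_neq0.
  have V1 : 1 \notin V by rewrite mem_span2 P1.
  have Vg : g \notin V by rewrite mem_span2 Pg mulf_neq0.
  apply: (reach8 1) => //; apply: ddiff1_zero => //.
  by rewrite P1 EN c3; char2_ring.
have P1 : span2_poly c (c * w) 1 = g ^+ 3 + g ^+ 2 + 1.
  by rewrite span2_poly1 Es EN c3; char2_ring.
have Pg : span2_poly c (c * w) g = g ^+ 3 by rewrite /span2_poly Es EN c3; char2_ring.
have V1g : 1 + g \notin V.
  rewrite mem_span2 span2_polyD P1 Pg.
  rewrite (_ : g ^+ 3 + g ^+ 2 + 1 + g ^+ 3 = (g + 1) ^+ 2); last by char2_ring.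
  by rewrite expf_neq0.
have V1 : 1 \notin V by rewrite mem_span2 P1.
have Vg : g \notin V by rewrite mem_span2 Pg expf_neq0.
apply: (reach8 g) => //; apply: ddiffg_zero => //.
by rewrite Pg EN c3; char2_ring.
Qed.

Lemma nabla_reaches4_omega (w : F) : w ^+ 2 + w + 1 = 0 -> nabla_reaches f 4.
Proof.
move=> hw; have c0 : 1 + g != 0 by rewrite addr_eq0_char2 eq_sym.
have [b0 ab Es _] := span2_cube_root1 c0 hw.
have P1g : span2_poly (1 + g) ((1 + g) * w) 1 = span2_poly (1 + g) ((1 + g) * w) g.
  by apply/eqP; rewrite -addr_eq0_char2 -span2_polyD -mem_span2 mem_span2l.
have D0 : ddiff f (1 + g) ((1 + g) * w) 0 = 0.
  by apply: ddiff0_zero_same; rewrite // !mem_span2 P1g.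
by exists (1 + g), ((1 + g) * w); split => //; apply: nabla_ab_ge4 D0.
Qed.

Lemma nabla_reaches4_artin_schreier (u : F) :
  u ^+ 2 + u = g^-1 \/ u ^+ 2 + u = g^-1 + 1 -> nabla_reaches f 4.
Proof.
have gV : g * g^-1 = 1 by rewrite mulfV.
have g10 : g + 1 != 0 by rewrite addr_eq0_char2.
have ginv0 : g^-1 != 0 by rewrite invr_eq0.
case=> hu.
  have u2 : u ^+ 2 = g^-1 + u by apply: (add_eq_char2 hu); char2_ring.
  have u0 : u != 0 by apply: contra_eq_neq hu => ->; rewrite expr0n addr0 eq_sym.
  have u1 : u != 1.
    by apply: contra_eq_neq hu => ->; rewrite expr1n addrr_pchar2 // eq_sym.
  have b0 : g * u != 0 by rewrite mulf_neq0.
  have ab : g != g * u by rewrite -[g in g != _]mulr1 (inj_eq (mulfI g0)) eq_sym.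
  have Es : g ^+ 2 + g * (g * u) + (g * u) ^+ 2 = g ^+ 2 + g by char2_ring: u2 gV.
  have EN : g * (g * u) * (g + g * u) = g ^+ 2 by char2_ring: u2 gV.
  have P1 : span2_poly g (g * u) 1 = g + 1 by rewrite span2_poly1 Es EN; char2_ring.
  have V1 : 1 \notin span2 g (g * u) by rewrite mem_span2 P1 addr_eq0_char2.
  have D0 : ddiff f g (g * u) 0 = 0.
    apply: ddiff0_zero_sep => //; first by rewrite (negbTE V1) mem_span2l.
    by rewrite Es EN; char2_ring.
  by exists g, (g * u); split => //; apply: nabla_ab_ge4 D0.
have u2 : u ^+ 2 = g^-1 + 1 + u by apply: (add_eq_char2 hu); char2_ring.
have bb1 : (g + u) * (g + u + 1) != 0.
  have : g * ((g + u) * (g + u + 1)) = (g + 1) ^+ 3 by char2_ring: u2 gV.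
  by apply: contra_eq_neq => ->; rewrite mulr0 eq_sym expf_neq0.
have [b0 b1] : g + u != 0 /\ 1 != g + u.
  move: bb1; rewrite mulf_eq0 negb_or => /andP[-> b1].
  by split; rewrite // eq_sym -addr_eq0_char2.
have Pg : span2_poly 1 (g + u) g = (g + 1) ^+ 2 by rewrite /span2_poly; char2_ring: u2 gV.
have Vg : g \notin span2 1 (g + u) by rewrite mem_span2 Pg expf_neq0.
have V1g : 1 + g \notin span2 1 (g + u) by rewrite addrC span2_addr // mem_span2l.
have Dg : ddiff f 1 (g + u) g = 0.
  by apply: ddiffg_zero; rewrite ?oner_neq0 // Pg; char2_ring: u2 gV.
have one0 := oner_neq0 F.
by exists 1, (g + u); split => //; apply: nabla_ab_ge4 Dg.
Qed.

Lemma nabla_reaches8 : nabla8_cond -> nabla_reaches f 8.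
Proof.
have [G1|G1] := eqVneq (g ^+ 3 + g + 1) 0; first by move=> _; apply: nabla_reaches8_cubic1.
have [G2|G2] := eqVneq (g ^+ 3 + g ^+ 2 + 1) 0; first by move=> _; apply: nabla_reaches8_cubic2.
rewrite /nabla8_cond (negbTE G1) (negbTE G2) !orbF.
case/andP=> /existsP[w /eqP hw] C; case/orP: C => /existsP[c /andP[c4 /eqP c3]];
  have c0 : c != 0 by apply: contraNneq c4 => ->; rewrite /inF4 expr0n.
  by apply: (nabla_reaches8_cube hw c0); right.
by apply: (nabla_reaches8_cube hw c0); left.
Qed.

Lemma nabla_reaches4 : nabla_reaches f 4.
Proof.
have [/existsP[w /eqP hw]|no_omega] := boolP contains_F4.
  exact: nabla_reaches4_omega hw.
have [u hu] := artin_schreier g^-1 no_omega.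
exact: nabla_reaches4_artin_schreier hu.
Qed.

Lemma nabla_swapped_inv : nabla f = if nabla8_cond then 8%N else 4%N.
Proof.
apply: nabla_eq_reached; case: ifP => cond.
- by move=> a b a0 b0 ab; apply: nabla_ab_swapped_inv_le8.
- by move=> a b a0 b0 ab; apply: nabla_ab_swapped_inv_le4; rewrite ?cond.
- exact: nabla_reaches8.
- exact: nabla_reaches4.
Qed.

End SwappedInverse.

Section FieldOrder.

Variable n : nat.
Hypothesis cardF : #|F| = (2 ^ n)%N.

Lemma expr_2exp_card (x : F) : x ^+ (2 ^ n) = x.
Proof. by rewrite -cardF expf_card. Qed.

Lemma dvd2_of_cube_root1 (w : F) : w ^+ 2 + w + 1 = 0 -> (2 %| n)%N.
Proof.
move=> hw; have w2 : w ^+ 2 = w + 1 by apply: (add_eq_char2 hw); char2_ring.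
have w4 : w ^+ (2 ^ 2) = w by rewrite -[(2 ^ 2)%N]/4%N; char2_ring: w2.
have w2w : w ^+ 2 != w by rewrite w2 -[w in _ != w]addr0 (inj_eq (addrI w)) oner_neq0.
by apply: (prime_dvd_of_expr_2exp _ w4 (expr_2exp_card w) w2w).
Qed.

Lemma dvd3_of_F8 (x : F) : x ^+ 8 = x -> x ^+ 2 != x -> (3 %| n)%N.
Proof. by move=> x8; apply: (prime_dvd_of_expr_2exp (k := 3) _ x8 (expr_2exp_card x)). Qed.

Lemma contains_F4_of_even : (2 %| n)%N -> contains_F4.
Proof.
move=> even_n; have units3 : (3 %| #|[set: {unit F}]|)%N.
  rewrite card_finField_unit cardF; case/dvdnP: even_n => k ->.
  rewrite mulnC expnM -[(2 ^ 2)%N]/4%N -subn1 -eqn_mod_dvd ?expn_gt0 //.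
  by rewrite -modnXm -[(4 %% 3)%N]/1%N exp1n.
have [x _ ox] := Cauchy (isT : prime 3) units3.
have x3 : val x ^+ 3 = 1 by rewrite -FinRing.val_unitX -ox expg_order.
have x1 : val x != 1.
  apply/eqP => x1; have x_1 : x = 1%g by apply: val_inj.
  by move: ox; rewrite x_1 order1.
apply/existsP; exists (val x).
have : (val x + 1) * (val x ^+ 2 + val x + 1) == 0.
  have -> : (val x + 1) * (val x ^+ 2 + val x + 1) = val x ^+ 3 + 1 by char2_ring.
  by rewrite x3 addrr_pchar2.
by rewrite mulf_eq0 addr_eq0_char2 (negbTE x1).
Qed.

Lemma nabla8_condE (g : F) : ~~ inF2 g -> nabla8_cond g =
  ((2 %| n)%N && (inCn (g ^+ 3 + g ^+ 2) || inCn (g + 1)))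
  || ((3 %| n)%N && inF8 g && ~~ inF2 g).
Proof.
move=> g2; rewrite g2 andbT /inF8; apply/idP/idP.
  case/or3P=> [/andP[/existsP[w /eqP hw] ->]|/eqP G|/eqP G].
  - by rewrite (dvd2_of_cube_root1 hw).
  - have g3 : g ^+ 3 = g + 1 by apply: (add_eq_char2 G); char2_ring.
    have g8 : g ^+ 8 = g by char2_ring: g3.
    by rewrite (dvd3_of_F8 g8 g2) g8 eqxx orbT.
  - have g3 : g ^+ 3 = g ^+ 2 + 1 by apply: (add_eq_char2 G); char2_ring.
    have g8 : g ^+ 8 = g by char2_ring: g3.
    by rewrite (dvd3_of_F8 g8 g2) g8 eqxx orbT.
case/orP=> [/andP[/contains_F4_of_even omega C]|/andP[_ /eqP g8]].
  by rewrite /nabla8_cond omega C.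
by case: (F8_cubic g8 g2) => /eqP G; rewrite /nabla8_cond G !orbT.
Qed.

End FieldOrder.

End Char2.

Theorem corollary4p2 (F : finFieldType) (n : nat) :
  (0 < n)%N -> #|F| = (2 ^ n)%N ->
  (forall gamma : F, ~~ inF2 gamma ->
     nabla (swapped_inv gamma) =
       (if ((2 %| n)%N && (inCn (gamma ^+ 3 + gamma ^+ 2) || inCn (gamma + 1)))
           || ((3 %| n)%N && inF8 gamma && ~~ inF2 gamma)
        then 8%N else 4%N))
  /\ (odd n -> ~~ (3 %| n)%N ->
      forall gamma : F, ~~ inF2 gamma -> nabla (swapped_inv gamma) = 4%N).
Proof.
move=> _ cardF; have char2 : 2 \in [pchar F] := card_finPcharP cardF (isT : prime 2).
have nablaE (g : F) :
    ~~ inF2 g -> nabla (swapped_inv g) = if nabla8_cond g then 8%N else 4%N.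
  move=> g2; apply: nabla_swapped_inv => //;
    by apply: contraNneq g2 => ->; rewrite /inF2 ?expr0n ?expr1n.
split=> [g g2|odd_n n3 g g2]; rewrite nablaE // (nabla8_condE char2 cardF) //.
by rewrite dvdn2 odd_n (negbTE n3).
Qed.
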